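(* Let $B$ be the simplicial $2$-sphere obtained from the bipyramid (the triangulation of $S^2$ with $5$ vertices and $6$ triangles) by a stellar subdivision of each of its $6$ triangles (adding a new vertex inside each triangle and joining it to the three vertices of that triangle), so that $f(B)=18$. Then $B$ has no winning strategy for the coloring game: in any play at most $4$ edges become red, hence at most $4<18/4$ triangles become green.
   Context: Coloring game on a simplicial $2$-sphere $B$: (1) choose one or two vertices of $B$ and color them red; (2) choose an edge of $B$ both of whose endpoints are currently uncolored and which, together with some already red vertex, spans a triangle of $B$; color the edge and its two endpoints red and color that triangle green. Step (2) may be repeated as long as possible. $B$ has a winning strategy if some admissible sequence of moves produces at least $f(B)/4$ green triangles, where $f(B)$ is the number of triangles of $B$. *)

From mathcomp Require Import all_boot.
Set Implicit Arguments. Unset Strict Implicit. Unset Printing Implicit Defensive.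

Section Game.
Variable T : finType.

(* A simplicial 2-sphere is given by its set of triangles K (each a 3-subset of T);
   edges of K are the 2-subsets of triangles of K. *)

Definition move_ok (K : {set {set T}}) (red : {set T}) (m : T * T * T) : bool :=
  let: (u, v, w) := m in
  [&& u \notin red, v \notin red, w \in red & [set u; v; w] \in K].

Fixpoint play_ok (K : {set {set T}}) (red : {set T}) (ms : seq (T * T * T)) : bool :=
  match ms with
  | [::] => true
  | m :: ms' =>
      let: (u, v, w) := m in
      move_ok K red m && play_ok K (u |: (v |: red)) ms'
  end.

Definition green (ms : seq (T * T * T)) : {set {set T}} :=
  [set (let: (u, v, w) := m in [set u; v; w]) | m in ms].

(* B has a winning strategy: some admissible play (step (1) with one or two
   red vertices, then step (2) moves) yields at least f(B)/4 green triangles. *)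
Definition winning (K : {set {set T}}) : Prop :=
  exists (S : {set T}) (ms : seq (T * T * T)),
    [/\ 1 <= #|S| <= 2, play_ok K S ms & #|K| <= 4 * #|green ms|].
End Game.

(* The bipyramid: apexes 0,1, equator 2,3,4; triangles
   (0,2,3),(0,3,4),(0,4,2),(1,2,3),(1,3,4),(1,4,2).
   Stellar subdivision of each with new vertices 5,6,7,8,9,10 respectively. *)
Definition tri (x y z : nat) : {set 'I_11} := [set inord x; inord y; inord z].

Definition stellar_bipyramid : {set {set 'I_11}} :=
  [set:: [:: tri 5 0 2; tri 5 0 3; tri 5 2 3;
             tri 6 0 3; tri 6 0 4; tri 6 3 4;
             tri 7 0 4; tri 7 0 2; tri 7 4 2;
             tri 8 1 2; tri 8 1 3; tri 8 2 3;
             tri 9 1 3; tri 9 1 4; tri 9 3 4;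
             tri 10 1 4; tri 10 1 2; tri 10 4 2]].

From mathcomp Require Import all_boot zify.

Set Implicit Arguments.
Unset Strict Implicit.
Unset Printing Implicit Defensive.

(* Every triangle of B contains two vertices of the bipyramid, while a move
   colours two uncoloured vertices of its triangle; so every move colours at
   least one new bipyramid vertex.  The first move already leaves two of the
   five bipyramid vertices red, hence a play has at most 1 + 3 = 4 moves. *)

Lemma card_green_leq_size (T : finType) (ms : seq (T * T * T)) :
  #|green ms| <= size ms.
Proof. exact: leq_trans (leq_imset_card _ _) (card_size ms). Qed.

Section MovesThroughVertexSet.

Variables (T : finType) (K : {set {set T}}) (O : {set T}).
Hypothesis K_meets_O : {in K, forall t, 1 < #|O :&: t|}.

Lemma move_ok_colors_vertex_set red u v w :
  move_ok K red (u, v, w) -> (u \in O) || (v \in O).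
Proof.
case/and4P=> _ _ _ /K_meets_O; apply: contraLR; rewrite negb_or => /andP[uO vO].
rewrite -leqNgt -(cards1 w); apply/subset_leq_card/subsetP => x.
rewrite !inE => /andP[xO /orP[/orP[]|]] /eqP xE //.
- by rewrite -xE xO in uO.
- by rewrite -xE xO in vO.
Qed.

Lemma play_ok_size_leq red ms : play_ok K red ms -> size ms <= #|O :\: red|.
Proof.
elim: ms red => [|[[u v] w] ms IH] red //= /andP[mv /IH size_ms].
apply: leq_ltn_trans size_ms _; apply/proper_card/properP; split.
  by apply: setDS; rewrite setUA subsetUr.
have := move_ok_colors_vertex_set mv; case/and4P: mv => uR vR _ _ /orP[uO|vO].
- by exists u; rewrite !inE ?uO ?uR ?eqxx.
- by exists v; rewrite !inE ?vO ?vR ?eqxx ?orbT.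
Qed.

Lemma play_ok_size_leq_pred red ms : play_ok K red ms -> size ms <= #|O|.-1.
Proof.
case: ms => [|[[u v] w] ms] //= /andP[mv /play_ok_size_leq size_ms].
case/and4P: mv => _ _ wR /K_meets_O tO.
have tO_le : #|O :&: [set u; v; w]| <= #|O| := subset_leq_card (subsetIl _ _).
have : #|O :\: (u |: (v |: red))| <= #|O :\: [set u; v; w]|.
  apply/subset_leq_card/setDS/subsetP => x; rewrite !inE.
  by case/orP=> [/orP[]|] /eqP ->; rewrite ?eqxx ?wR ?orbT.
rewrite [X in _ <= X -> _]cardsD; lia.
Qed.

Lemma not_winning_of_size_bound : 4 * #|O|.-1 < #|K| -> ~ winning K.
Proof.
move=> small [S [ms [_ /play_ok_size_leq_pred size_ms win]]].
have := card_green_leq_size ms; lia.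
Qed.

End MovesThroughVertexSet.

Definition bipyramid_vertices : {set 'I_11} := [set x : 'I_11 | x < 5].

Lemma card_bipyramid_vertices : #|bipyramid_vertices| = 5.
Proof.
have inj : injective (widen_ord (isT : 5 <= 11)).
  by move=> i j /(congr1 val) ij; apply: val_inj.
rewrite -[RHS](card_ord 5) -(card_imset _ inj); congr #|pred_of_set _|.
apply/setP => x; rewrite inE; apply/idP/imsetP => [x5|[y _ ->]]; last exact: (ltn_ord y).
by exists (Ordinal x5) => //; apply: val_inj.
Qed.

Definition stellar_triples : seq (nat * nat * nat) :=
  [:: (5,0,2); (5,0,3); (5,2,3); (6,0,3); (6,0,4); (6,3,4); (7,0,4); (7,0,2); (7,4,2);
      (8,1,2); (8,1,3); (8,2,3); (9,1,3); (9,1,4); (9,3,4); (10,1,4); (10,1,2); (10,4,2)].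

Definition tri_of (p : nat * nat * nat) : {set 'I_11} := tri p.1.1 p.1.2 p.2.

Lemma stellar_bipyramidE : stellar_bipyramid = [set:: map tri_of stellar_triples].
Proof. by []. Qed.

Lemma tri_meets_bipyramid_vertices a b c :
  b < 5 -> c < 5 -> b != c -> 1 < #|bipyramid_vertices :&: tri a b c|.
Proof.
move=> b5 c5 bc; have [b11 c11] : b < 11 /\ c < 11 by lia.
have inj_bc : inord b != inord c :> 'I_11 by rewrite -val_eqE /= !inordK.
apply: (@leq_trans #|[set inord b; inord c] : {set 'I_11}|); first by rewrite cards2 ltnS lt0b.
apply/subset_leq_card/subsetP => x; rewrite !inE.
by case/orP=> /eqP ->; rewrite inordK // ?b5 ?c5 !eqxx ?orbT.
Qed.

Lemma stellar_bipyramid_meets_vertices :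
  {in stellar_bipyramid, forall t, 1 < #|bipyramid_vertices :&: t|}.
Proof.
move=> t; rewrite stellar_bipyramidE inE => /mapP[[[a b] c] abc ->].
have /allP/(_ _ abc)/and3P[b5 c5 bc] :
  all (fun p => [&& p.1.2 < 5, p.2 < 5 & p.1.2 != p.2]) stellar_triples by [].
exact: tri_meets_bipyramid_vertices.
Qed.

(* Finite sets do not compute, so triangles are told apart by their
   characteristic vectors, which do. *)
Definition indicator (t : {set 'I_11}) : seq bool :=
  [seq inord i \in t | i <- iota 0 11].

Lemma indicator_tri a b c : a < 11 -> b < 11 -> c < 11 ->
  indicator (tri a b c) = [seq (i == a) || (i == b) || (i == c) | i <- iota 0 11].
Proof.
move=> a11 b11 c11; apply/eq_in_map => i; rewrite mem_iota add0n => /andP[_ i11].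
by rewrite /tri !inE -!val_eqE /= !inordK.
Qed.

Lemma card_stellar_bipyramid : #|stellar_bipyramid| = 18.
Proof.
rewrite stellar_bipyramidE cardsE; apply/card_uniqP.
apply: (@map_uniq _ _ indicator); rewrite -map_comp.
have bounded : all (fun p => [&& p.1.1 < 11, p.1.2 < 11 & p.2 < 11]) stellar_triples by [].
suff -> : map (indicator \o tri_of) stellar_triples =
  [seq [seq (i == p.1.1) || (i == p.1.2) || (i == p.2) | i <- iota 0 11]
  | p <- stellar_triples] by vm_compute.
apply/eq_in_map => p /(allP bounded)/and3P[a11 b11 c11]; exact: indicator_tri.
Qed.

Theorem mainTheorem13 :
  #|stellar_bipyramid| = 18 /\
  (forall (S : {set 'I_11}) (ms : seq ('I_11 * 'I_11 * 'I_11)),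
      1 <= #|S| <= 2 -> play_ok stellar_bipyramid S ms ->
      size ms <= 4 /\ #|green ms| <= 4) /\
  ~ winning stellar_bipyramid.
Proof.
have meets := stellar_bipyramid_meets_vertices.
have size_le (S : {set 'I_11}) ms : play_ok stellar_bipyramid S ms -> size ms <= 4.
  by move/(play_ok_size_leq_pred meets); rewrite card_bipyramid_vertices.
split; first exact: card_stellar_bipyramid.
split.
  move=> S ms _ /size_le le4; split=> //.
  exact: leq_trans (card_green_leq_size ms) le4.
apply: (not_winning_of_size_bound meets).
by rewrite card_bipyramid_vertices card_stellar_bipyramid.
Qed.
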